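(* Let $(N,C,\mathbf{A},k)$ be an instance with $|N|=n$ having at least one cohesive group, and let $c_{\max}$ be its maximum EJR degree. For every $\lambda\in[0,\frac{n}{k^2})$ satisfying $n>k(k+1)(c_{\max}-1)+\lambda k^2$, every committee output by $\lambda$-LS-PAV (from any initial committee) has EJR degree $c_{\max}$.
   Context: An instance consists of voters $N=\{1,\dots,n\}$, candidates $C$, approval ballots $A_i\subseteq C$ for $i\in N$, and a committee size $k$ with $1\le k\le|C|$. For $\ell\in\mathbb{N}$, $N'\subseteq N$ is an $\ell$-cohesive group if $|N'|\ge\ell n/k$ and $|\bigcap_{i\in N'}A_i|\ge\ell$ (a cohesive group is a $1$-cohesive group). A size-$k$ committee $W$ achieves EJR degree $c$ if for every $\ell\in\{1,\dots,k\}$ every $\ell$-cohesive group contains at least $c$ voters $i$ with $|A_i\cap W|\ge\ell$; its EJR degree is the largest such $c$, and the maximum EJR degree of the instance is the maximum over all size-$k$ committees. The PAV-score of $W$ is $s_{\mathrm{PAV}}(W)=\sum_{i=1}^n\sum_{j=1}^{|A_i\cap W|}\frac1j$, and $\Delta(W,c^+,c^-)=s_{\mathrm{PAV}}((W\setminus\{c^-\})\cup\{c^+\})-s_{\mathrm{PAV}}(W)$. The algorithm $\lambda$-LS-PAV starts from an arbitrary size-$k$ committee $W$ and, while there exist $c^+\notin W$ and $c^-\in W$ with $\Delta(W,c^+,c^-)\ge\lambda$, replaces $W$ by $(W\setminus\{c^-\})\cup\{c^+\}$; it then outputs $W$. *)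

From mathcomp Require Import all_boot all_order all_algebra.
Set Implicit Arguments. Unset Strict Implicit. Unset Printing Implicit Defensive.
Import Order.TTheory GRing.Theory Num.Theory.

Section Defs.
Variables (n : nat) (C : finType) (A : 'I_n -> {set C}) (k : nat).

(* N' is an l-cohesive group: |N'| >= l n / k  (cleared of the denominator,
   k >= 1) and |/\_{i in N'} A_i| >= l. *)
Definition cohesive_group (l : nat) (N' : {set 'I_n}) : bool :=
  (l * n <= #|N'| * k)%N && (l <= #|\bigcap_(i in N') A i|)%N.

Definition achieves_ejr_degree (W : {set C}) (c : nat) : bool :=
  [forall l : 'I_k.+1, forall N' : {set 'I_n},
    ((1 <= l)%N && cohesive_group l N') ==>
    (c <= #|[set i in N' | l <= #|A i :&: W|]|)%N].

(* EJR degree of W: the largest c achieved. When a cohesive group exists,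
   every achieved c is <= n, so the largest is the max over c <= n. *)
Definition ejr_degree (W : {set C}) : nat :=
  \max_(c < n.+1 | achieves_ejr_degree W c) (c : nat).

Definition max_ejr_degree : nat :=
  \max_(W : {set C} | #|W| == k) ejr_degree W.

Variable R : realFieldType.
Local Open Scope ring_scope.

Definition pav_score (W : {set C}) : R :=
  \sum_(i < n) \sum_(j < #|A i :&: W|) (j.+1)%:R^-1.

Definition swap (W : {set C}) (cp cm : C) : {set C} := cp |: (W :\ cm).

Definition pav_delta (W : {set C}) (cp cm : C) : R :=
  pav_score (swap W cp cm) - pav_score W.

Definition ls_step (lam : R) (W W' : {set C}) : Prop :=
  exists cp cm, [/\ cp \notin W, cm \in W, lam <= pav_delta W cp cm
                  & W' = swap W cp cm].

Inductive ls_reach (lam : R) : {set C} -> {set C} -> Prop :=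
| ls_refl W : ls_reach lam W W
| ls_next W1 W2 W3 : ls_step lam W1 W2 -> ls_reach lam W2 W3 -> ls_reach lam W1 W3.

Definition ls_pav_output (lam : R) (W : {set C}) : Prop :=
  (exists W0 : {set C}, #|W0| = k /\ ls_reach lam W0 W) /\
  ~ (exists W', ls_step lam W W').

End Defs.

From mathcomp Require Import all_boot all_order all_algebra.
From mathcomp Require Import ring lra.
Import Order.TTheory GRing.Theory Num.Theory.
Set Implicit Arguments. Unset Strict Implicit.
Local Open Scope ring_scope.

(* If an l-cohesive group N' had fewer than c_max members with at least l
   approved winners, some member approves fewer than l winners, so one of the
   >= l commonly approved candidates, cp, lies outside W.  Swapping cp in for
   each of the k winners in turn changes the PAV score by at least
   sum_{i approves cp} (k+1)/(|A_i :&: W|+1) - n in total, and local optimality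
   caps this by k lam.  Each unsatisfied member of N' contributes at least
   (k+1)/l, all but at most c_max - 1 members are unsatisfied, and
   |N'| >= l n / k; together these force n <= k(k+1)(c_max - 1) + k^2 lam. *)

Lemma card_setI_swap (T : finType) (B W : {set T}) (cp cm : T) :
  cp \notin W -> cm \in W ->
  (#|B :&: swap W cp cm| + (cm \in B) = #|B :&: W| + (cp \in B))%N.
Proof.
move=> cpW cmW; rewrite /swap (cardsD1 cp) (cardsD1 cm (B :&: W)) -!setIDA.
rewrite setU1K; last by apply: contra cpW => /setD1P[].
rewrite !inE cmW eqxx andbT orTb andbT.
by rewrite [in LHS]addnC addnA [in RHS]addnAC.
Qed.

Section Harmonic.
Variable R : realFieldType.

Definition harmonic (m : nat) : R := \sum_(j < m) (j.+1)%:R^-1.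

Lemma harmonicS m : harmonic m.+1 = harmonic m + (m.+1)%:R^-1.
Proof. by rewrite /harmonic big_ord_recr. Qed.

Lemma harmonic_swap (T : finType) (B W : {set T}) (cp cm : T) :
  cp \notin W -> cm \in W ->
  harmonic #|B :&: swap W cp cm| - harmonic #|B :&: W| =
  ((cp \in B) && (cm \notin B))%:R / (#|B :&: W|.+1)%:R
  - ((cp \notin B) && (cm \in B))%:R / #|B :&: W|%:R.
Proof.
move=> cpW cmW; have := card_setI_swap B cpW cmW.
case: (cp \in B); case: (cm \in B) => /=; rewrite ?addn0 ?addn1.
- by move=> [->]; rewrite subrr !mul0r subrr.
- by move=> ->; rewrite harmonicS mul1r mul0r subr0 addrC addKr.
- by move=> <-; rewrite harmonicS mul1r mul0r sub0r opprD addrA subrr add0r.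
- by move=> ->; rewrite subrr !mul0r subrr.
Qed.

Lemma sumr_mem_card (T : finType) (W S : {set T}) :
  \sum_(x in W) ((x \in S)%:R : R) = #|W :&: S|%:R.
Proof.
rewrite -sum1_card natr_sum [RHS]big_mkcond [LHS]big_mkcond /=.
by apply: eq_bigr => x _; rewrite inE; case: (x \in W); case: (x \in S).
Qed.

Lemma sum_harmonic_swap_ge (T : finType) (B W : {set T}) (cp : T) :
  cp \notin W ->
  (cp \in B)%:R * (#|W|.+1)%:R / (#|B :&: W|.+1)%:R - 1 <=
  \sum_(cm in W) (harmonic #|B :&: swap W cp cm| - harmonic #|B :&: W|).
Proof.
move=> cpW; rewrite (eq_bigr _ (fun cm cmW => harmonic_swap B cpW cmW)).
rewrite sumrB -!mulr_suml; set u := #|B :&: W|.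
have splitW : (u + #|W :&: ~: B| = #|W|)%N by rewrite -setDE /u setIC cardsID.
case: (cp \in B) => /=; rewrite big1_eq.
- rewrite mul0r subr0 mul1r (eq_bigr (fun cm => (cm \in ~: B)%:R)); last first.
    by move=> cm _; rewrite inE.
  rewrite sumr_mem_card -splitW le_eqVlt; apply/orP; left; apply/eqP.
  by rewrite -addSn natrD mulrDl divff ?pnatr_eq0 // addrAC subrr add0r.
- rewrite !mul0r !sub0r lerN2 sumr_mem_card setIC -/u.
  by have [->|u_gt0] := eqVneq u 0%N; rewrite ?mul0r ?ler01 // divff ?pnatr_eq0.
Qed.

End Harmonic.

Lemma cohesive_count_arith (R : realFieldType) (K L N q u lam : R) :
  0 <= K -> 1 <= L -> 0 <= q ->
  L * N <= (q + u) * K -> (K + 1) * u <= L * (N + K * lam) ->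
  N <= K * (K + 1) * q + lam * K ^+ 2.
Proof.
move=> K_ge0 L_ge1 q_ge0 hN hu.
have K1_ge0 : 0 <= K + 1 by lra.
have := ler_wpM2l K_ge0 hu; have := ler_wpM2l K1_ge0 hN.
have : K * (K + 1) * q <= L * (K * (K + 1) * q).
  by rewrite ler_peMl // !mulr_ge0.
rewrite -(@ler_pM2l _ L); nra.
Qed.

Section EJRDegree.
Variables (n : nat) (C : finType) (A : 'I_n -> {set C}) (k : nat).

Lemma ejr_degree_le_max (W : {set C}) :
  #|W| = k -> (ejr_degree A k W <= max_ejr_degree A k)%N.
Proof.
by move=> Wk; apply: (leq_bigmax_cond (F := ejr_degree A k)); rewrite Wk.
Qed.

Lemma max_ejr_degree_le : (max_ejr_degree A k <= n)%N.
Proof.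
by apply/bigmax_leqP => W _; apply/bigmax_leqP => c _; rewrite -ltnS.
Qed.

Lemma ejr_degree_ge (W : {set C}) (c : nat) :
  (c <= n)%N -> achieves_ejr_degree A k W c -> (c <= ejr_degree A k W)%N.
Proof.
rewrite -ltnS => c_lt.
by apply: (leq_bigmax_cond (F := fun c : 'I_n.+1 => val c) (Ordinal c_lt)).
Qed.

End EJRDegree.

Section LocalSearchPAV.
Variables (R : realFieldType) (n : nat) (C : finType) (A : 'I_n -> {set C}).

Lemma sum_pav_delta_ge (W : {set C}) (cp : C) : cp \notin W ->
  \sum_(i | cp \in A i) (#|W|.+1)%:R / (#|A i :&: W|.+1)%:R - n%:R <=
  \sum_(cm in W) pav_delta A R W cp cm.
Proof.
move=> cpW; rewrite /pav_delta /pav_score.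
rewrite (eq_bigr (fun cm => \sum_i
  (harmonic R #|A i :&: swap W cp cm| - harmonic R #|A i :&: W|))); last first.
  by move=> cm _; rewrite sumrB.
have -> : n%:R = \sum_(i < n) (1 : R) by rewrite sumr_const card_ord.
rewrite exchange_big /= big_mkcond -sumrB; apply: ler_sum => i _.
have := sum_harmonic_swap_ge R (A i) cpW.
by case: (cp \in A i); rewrite ?mul1r ?mul0r.
Qed.

Variables (k : nat) (lam : R).

Lemma ls_reach_card (W0 W : {set C}) : ls_reach A lam W0 W -> #|W| = #|W0|.
Proof.
elim=> // W1 W2 W3 [cp [cm [cpW cmW _ ->]]] _ ->.
by rewrite /swap cardsU1 !inE (negbTE cpW) andbF (cardsD1 cm W1) cmW.
Qed.

Lemma ls_pav_output_card (W : {set C}) : ls_pav_output A k lam W -> #|W| = k.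
Proof. by move=> [[W0 [<- /ls_reach_card]]]. Qed.

Lemma ls_pav_output_delta_lt (W : {set C}) (cp cm : C) :
  ls_pav_output A k lam W -> cp \notin W -> cm \in W ->
  pav_delta A R W cp cm < lam.
Proof.
move=> [_ stuck] cpW cmW; rewrite ltNge; apply/negP => improving.
by apply: stuck; exists (swap W cp cm), cp, cm.
Qed.

Lemma ls_pav_output_approval_bound (W : {set C}) (cp : C) :
  ls_pav_output A k lam W -> cp \notin W ->
  \sum_(i | cp \in A i) (k.+1)%:R / (#|A i :&: W|.+1)%:R <= n%:R + k%:R * lam.
Proof.
move=> hW cpW; rewrite addrC -lerBlDr -(ls_pav_output_card hW).
apply: le_trans (sum_pav_delta_ge cpW) _.
rewrite mulr_natl -sumr_const.
by apply: ler_sum => cm cmW; rewrite ltW // (ls_pav_output_delta_lt hW).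
Qed.

Lemma ls_pav_unsatisfied_bound (W : {set C}) (l : nat) (N' : {set 'I_n}) :
  ls_pav_output A k lam W -> 0 <= lam -> (l <= #|\bigcap_(i in N') A i|)%N ->
  (k.+1)%:R * #|[set i in N' | (#|A i :&: W| < l)%N]|%:R <=
  l%:R * (n%:R + k%:R * lam).
Proof.
move=> hW lam_ge0 l_common; set U := [set i in N' | _].
have [->|[i iU]] := set_0Vmem U.
  by rewrite cards0 mulr0 !mulr_ge0 ?addr_ge0 ?mulr_ge0.
have [cp /bigcapP cpA cpW] :
    exists2 cp, cp \in \bigcap_(j in N') A j & cp \notin W.
  apply/exists_inP; rewrite -negb_forall_in; apply: contraL l_common.
  move=> /forall_inP common_in_W; move: iU; rewrite inE -ltnNge => /andP[iN'].
  apply: leq_ltn_trans; apply: subset_leq_card.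
  by rewrite subsetI bigcap_inf //=; apply/subsetP.
apply: le_trans (ler_wpM2l (ler0n _ l) (ls_pav_output_approval_bound hW cpW)).
rewrite [_ * #|U|%:R]mulr_natr -sumr_const mulr_sumr.
rewrite big_mkcond [X in _ <= X]big_mkcond /=.
apply: ler_sum => j _; rewrite inE; case: ifP => [/andP[jN' ltl] | _].
  rewrite cpA // mulrCA ler_peMr ?ler0n // ler_pdivlMr ?ltr0n //.
  by rewrite mul1r ler_nat.
by case: ifP; rewrite ?mulr0 // mulr_ge0 ?divr_ge0.
Qed.

Lemma ls_pav_cohesive_bound (W : {set C}) (l : nat) (N' : {set 'I_n}) :
  ls_pav_output A k lam W -> 0 <= lam -> (1 <= l)%N ->
  cohesive_group A k l N' ->
  n%:R <= (k * k.+1)%:R * #|[set i in N' | (l <= #|A i :&: W|)%N]|%:R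
          + lam * (k ^ 2)%:R.
Proof.
move=> hW lam_ge0 l_gt0 /andP[l_size l_common].
have := ls_pav_unsatisfied_bound hW lam_ge0 l_common.
set unsat := [set i in N' | _] => unsat_bound; set sat := [set i in N' | _].
have split_N' : (#|sat| + #|unsat| = #|N'|)%N.
  rewrite -(cardsID [set i | (l <= #|A i :&: W|)%N] N') /sat /unsat.
  rewrite !setIdE setDE.
  by congr (_ + _)%N; apply: eq_card => i; rewrite !inE ltnNge.
rewrite natrX natrM -addn1 natrD.
apply: (cohesive_count_arith (L := l%:R) (u := #|unsat|%:R));
  rewrite ?ler0n ?ler1n //.
  by rewrite -natrD split_N' -!natrM ler_nat.
by rewrite -(natrD _ k 1) addn1.
Qed.

End LocalSearchPAV.

Theorem proposition5 (R : realFieldType) (n : nat) (C : finType)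
  (A : 'I_n -> {set C}) (k : nat)
  (hk : (1 <= k <= #|C|)%N)
  (hcoh : exists N' : {set 'I_n}, cohesive_group A k 1 N')
  (lam : R)
  (hlam0 : 0 <= lam) (hlam1 : lam < n%:R / (k ^ 2)%:R)
  (hn : (k * k.+1)%:R * ((max_ejr_degree A k)%:R - 1) + lam * (k ^ 2)%:R < n%:R)
  (W : {set C}) (hW : ls_pav_output A k lam W) :
  ejr_degree A k W = max_ejr_degree A k.
Proof.
apply/eqP; rewrite eqn_leq ejr_degree_le_max ?(ls_pav_output_card hW) //=.
apply: ejr_degree_ge; first exact: max_ejr_degree_le.
apply/forallP => l; apply/forallP => N'; apply/implyP => /andP[l_gt0 cohN'].
have := ls_pav_cohesive_bound hW hlam0 l_gt0 cohN'; set cnt := #|_|.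
rewrite leqNgt; apply: contraTN => cnt_lt; rewrite -ltNge; apply: le_lt_trans hn.
by rewrite lerD2r ler_wpM2l // lerBrDr -(natrD _ cnt 1) addn1 ler_nat.
Qed.
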